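(* Let $G=\langle a,b\mid a^n=1,\ b^t=a^k,\ b^{-1}ab=a^r\rangle$ with natural numbers $n,t,k,r$ satisfying $r^t\equiv1\pmod n$ and $k(r-1)\equiv0\pmod n$. Let $(v,i,c)\in\mathfrak{N}$ and $(v,\alpha_1,\beta_1),(v,\alpha_2,\beta_2)\in X_{v,i,c}$. Then $H_{v,\alpha_1,\beta_1o_v}$ and $H_{v,\alpha_2,\beta_2o_v}$ are conjugate in $G$ if and only if $\beta_1=\beta_2$ and $\alpha_1\equiv\alpha_2r^j\pmod v$ for some integer $j$.
   Context: For a divisor $v$ of $n$: $o_v=\operatorname{ord}_v(r)$, $\mathcal{B}_{o_v}=\{(w,i,c)\in\mathbb{Z}^3: w>0,\ w\mid n,\ w\mid r^{o_v}-1,\ o_vc>0,\ o_vc\mid t,\ w\mid k+i\tfrac{t}{o_vc}\}$. For integers $v,i,c$, $H_{v,i,c}=\langle a^v,a^ib^c\rangle$. $\mathfrak{N}=\{(v,i,c)\in\mathbb{Z}^3: v>0,\ v\mid n,\ c>0,\ c\mid t,\ 0\le i\le v-1,\ v\mid k+i\tfrac tc,\ o_v\mid c,\ v\mid i(r-1)\}$. For $(v,i,c)\in\mathfrak{N}$, $X_{v,i,c}$ is the set of $(v,\alpha,\beta)\in\mathcal{B}_{o_v}$ with $\beta o_v\mid c$, $\alpha\frac{c}{\beta o_v}\equiv i\pmod v$, $\beta=\frac{c\gcd(\alpha(r-1),v)}{v\,o_v}$ and $\gcd(v,\alpha,\beta)=1$. *)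

From mathcomp Require Import all_boot all_order all_algebra all_fingroup.
Set Implicit Arguments.
Unset Strict Implicit.
Unset Printing Implicit Defensive.
Import GRing.Theory Num.Theory.

Definition zexpg (gT : finGroupType) (x : gT) (z : int) : gT :=
  match z with
  | Posz m => (x ^+ m)%g
  | Negz m => (x ^- m.+1)%g
  end.

(* When gcd(r,v)=1
   this order is at most v, so searching in 1..v suffices (returns 0 if no
   such m exists, which never happens under the standing hypotheses). *)
Definition ordv (v r : nat) : nat :=
  head 0%N [seq m <- iota 1 v | r ^ m == 1 %[mod v]].

(* G = < a, b | a^n = 1, b^t = a^k, b^-1 a b = a^r >, realized as a finite
   group G generated by a and b satisfying the relations, with the universal
   property of the presentation with respect to all finite groups. *)
Definition is_metacyclic_presentation (gT : finGroupType) (G : {group gT})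
    (a b : gT) (n t k r : nat) : Prop :=
  [/\ G :=: <<[set a; b]>>%g,
      (a ^+ n = 1)%g, (b ^+ t = a ^+ k)%g, (a ^ b = a ^+ r)%g &
      forall (rT : finGroupType) (x y : rT),
        (x ^+ n = 1)%g -> (y ^+ t = x ^+ k)%g -> (x ^ y = x ^+ r)%g ->
        exists f : {morphism G >-> rT}, f a = x /\ f b = y].

Definition Hsub (gT : finGroupType) (a b : gT) (v : nat) (i c : int) : {set gT} :=
  <<[set (a ^+ v)%g; (zexpg a i * zexpg b c)%g]>>%g.

Definition in_frakN (n t k r v i c : nat) : Prop :=
  [/\ (0 < v)%N, (v %| n)%N, (0 < c)%N, (c %| t)%N & (i <= v - 1)%N] /\
  [/\ (v%:Z %| (k%:Z + i%:Z * (t %/ c)%N%:Z)%R)%Z,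
      (ordv v r %| c)%N &
      (v%:Z %| (i%:Z * (r%:Z - 1))%R)%Z].

Definition in_B (n t k r o : nat) (w i c : int) : Prop :=
  [/\ (0 < w)%R, (w %| n%:Z)%Z & (w %| (r%:Z ^+ o - 1)%R)%Z] /\
  [/\ (0 < o%:Z * c)%R, ((o%:Z * c)%R %| t%:Z)%Z &
      (w %| (k%:Z + i * (t%:Z %/ (o%:Z * c)%R)%Z)%R)%Z].

(* (v, alpha, beta) \in X_{v,i,c}; the condition
   beta = c gcd(alpha(r-1), v) / (v o_v) is written multiplicatively
   (v o_v > 0, so this is equivalent). *)
Definition in_X (n t k r v i c : nat) (alpha beta : int) : Prop :=
  let o := ordv v r in
  [/\ in_B n t k r o v%:Z alpha beta,
      ((beta * o%:Z)%R %| c%:Z)%Z,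
      ((alpha * (c%:Z %/ (beta * o%:Z)%R)%Z)%R = i%:Z %[mod v%:Z])%Z,
      (beta * (v%:Z * o%:Z) = c%:Z * (gcdz (alpha * (r%:Z - 1)) v%:Z))%R &
      gcdz (gcdz v%:Z alpha) beta = 1%R].

(* x = y * r^j (mod v) for an integer j; for j < 0, r^j denotes the
   inverse of r^|j| modulo v, i.e. the condition reads x * r^|j| = y. *)
Definition congr_rpow (v r : nat) (x y : int) (j : int) : Prop :=
  match j with
  | Posz m => (x = (y * r%:Z ^+ m)%R %[mod v%:Z])%Z
  | Negz m => ((x * r%:Z ^+ m.+1)%R = y %[mod v%:Z])%Z
  end.

From mathcomp Require Import all_boot all_order all_algebra all_fingroup.
From mathcomp Require Import zify.
Import GRing.Theory Num.Theory.

Set Implicit Arguments.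
Unset Strict Implicit.
Unset Printing Implicit Defensive.

(* Conjugating H_{v,m,c} = <a^v, a^m b^c> by a leaves it unchanged (as
   r^c = 1 mod v) and conjugating by b replaces m by m r, so the conjugates of
   H_{v,m,c} are exactly the H_{v,m r^j,c}; this is the "if" direction.
   For "only if", the universal property of the presentation maps G onto the
   group of right multiplications of G/<a^v> on itself, realised on
   Z_t x Z_v.  Since a^v dies there, H_{v,m,c} lands in the cyclic group
   generated by the image of a^m b^c, and the orbit of the trivial coset
   under that generator recovers c and m mod v. *)

Lemma modn_mulX1 d r e : r ^ e = 1 %[mod d] -> forall x, r ^ e * x = x %[mod d].
Proof. by move=> r_e1 x; rewrite -modnMml r_e1 modnMml mul1n. Qed.

Lemma modn_mulX_fixed d k r e : k * r = k %[mod d] -> k * r ^ e = k %[mod d].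
Proof.
move=> fix_k; elim: e => [|e IH]; first by rewrite muln1.
by rewrite expnSr mulnA -modnMml IH modnMml.
Qed.

Lemma eq_modn_pos d a b : 0 < a <= d -> 0 < b <= d -> a = b %[mod d] -> a = b.
Proof.
case/andP=> a_gt0 le_ad /andP [b_gt0 le_bd] e_ab.
have : a.-1 + 1 = b.-1 + 1 %[mod d] by rewrite !addn1 !prednK.
move/eqP; rewrite eqn_modDr !modn_small ?prednK // => /eqP.
by move/(congr1 succn); rewrite !prednK.
Qed.

Lemma eqmod_dvd d n x y : d %| n -> x = y %[mod n] -> x = y %[mod d].
Proof. by move=> dvd_dn e_xy; rewrite -(modn_dvdm x dvd_dn) e_xy modn_dvdm. Qed.

Lemma eqz_modn (x y v : nat) : (x%:Z = y %[mod v])%Z <-> x = y %[mod v].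
Proof. by rewrite !modz_nat; split=> [[]|->]. Qed.

Lemma PoszX (m e : nat) : ((m ^ e)%N%:Z = m%:Z ^+ e)%R.
Proof. by rewrite -!natz natrX. Qed.

Lemma congr_rpow_Posz (v r x y j : nat) :
  congr_rpow v r x y j <-> x = y * r ^ j %[mod v].
Proof. by rewrite /= -PoszX -PoszM eqz_modn. Qed.

Lemma congr_rpow_Negz (v r x y j : nat) :
  congr_rpow v r x y (Negz j) <-> x * r ^ j.+1 = y %[mod v].
Proof. by rewrite /= -PoszX -PoszM eqz_modn. Qed.

Lemma congr_rpow_modz (v r : nat) (x x' y y' j : int) :
  (x = x' %[mod v])%Z -> (y = y' %[mod v])%Z ->
  congr_rpow v r x y j <-> congr_rpow v r x' y' j.
Proof.
case: j => j /= e_x e_y.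
  by rewrite e_x -modzMml e_y modzMml.
by rewrite e_y -modzMml e_x modzMml.
Qed.

Lemma modz_absz_eqmod (z : int) (n v : nat) : 0 < n -> v %| n ->
  (`|(z %% n)%Z|%N%:Z = z %[mod v])%Z.
Proof.
move=> n_gt0 /dvdnP [u def_n].
have n_neq0 : (n%:Z != 0)%R by rewrite eqz_nat -lt0n.
by rewrite gez0_abs ?modz_ge0 // [in RHS](divz_eq z n) def_n PoszM mulrA modzMDl.
Qed.

Lemma eqmod_mul_subr1 (n k r : nat) :
  (k%:Z * (r%:Z - 1) = 0 %[mod n])%Z -> k * r = k %[mod n].
Proof.
move=> k_r1; have : (n%:Z %| (k%:Z * (r%:Z - 1))%R)%Z.
  by apply/dvdz_mod0P; rewrite k_r1 mod0z.
by rewrite mulrBr mulr1 -PoszM -eqz_mod_dvd => /eqP/eqz_modn.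
Qed.

(* The conditions of B_{o_v} on (v, alpha, beta), for the natural numbers
   m = alpha mod n and c = beta o_v (see in_B_in_Bn). *)
Definition in_Bn (t k r v m c : nat) : Prop :=
  [/\ 0 < c, c %| t, r ^ c = 1 %[mod v] & k + m * (t %/ c) = 0 %[mod v]].

Lemma in_Bn_mulX (t k r v m c j : nat) : k * r = k %[mod v] ->
  in_Bn t k r v m c -> in_Bn t k r v (m * r ^ j) c.
Proof.
move=> k_r [c_gt0 dvd_ct r_c hk]; split=> //.
rewrite -modnDml -(modn_mulX_fixed j k_r) modnDml mulnAC -mulnDl.
by rewrite -modnMml hk modnMml mul0n.
Qed.

Lemma in_B_in_Bn (n t k r o v : nat) (al be : int) :
  0 < n -> in_B n t k r o v al be ->
  exists2 bb : nat, be = bb & [/\ 0 < v, v %| n & in_Bn t k r v `|(al %% n)%Z| (bb * o)].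
Proof.
move=> n_gt0 [[v_gt0 dvd_vn dvd_v_r] [oc_gt0 dvd_oc_t dvd_v_k]].
case: be oc_gt0 dvd_oc_t dvd_v_k => [bb|bb] oc_gt0 dvd_oc_t dvd_v_k; last first.
  by move: oc_gt0; rewrite NegzE mulrN -PoszM; lia.
exists bb => //; rewrite -PoszM mulnC in oc_gt0 dvd_oc_t dvd_v_k.
rewrite ltz_nat in v_gt0 oc_gt0; rewrite dvdzE !absz_nat in dvd_vn.
rewrite dvdzE !absz_nat in dvd_oc_t; split=> //; split=> //.
  have r_o : r ^ o = 1 %[mod v] by apply/eqz_modn/eqP; rewrite eqz_mod_dvd PoszX.
  by rewrite mulnC expnM -modnXm r_o modnXm exp1n.
apply/eqz_modn; rewrite PoszD PoszM -divz_nat -modzDmr -modzMml.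
by rewrite modz_absz_eqmod // modzMml modzDmr mod0z; apply/dvdz_mod0P.
Qed.

Section CayleyModel.

Variables (t' v' r k : nat).
Local Notation t := t'.+1.
Local Notation v := v'.+1.

(* The point (y, x) stands for b^y a^x in G / <a^v>; mula and mulb are the
   right multiplications by a and b, since (b^y a^x) b = b^(y+1) a^(r x)
   and b^t = a^k. *)
Definition pt (y x : nat) : 'I_t * 'I_v := (inZp y, inZp x).

Definition mula (p : 'I_t * 'I_v) := pt p.1 (p.2 + 1).
Definition mulb (p : 'I_t * 'I_v) := pt p.1.+1 (r * p.2 + (p.1.+1 == t) * k).

Lemma pt_eq y x y' x' :
  pt y x = pt y' x' <-> y = y' %[mod t] /\ x = x' %[mod v].
Proof.
split=> [E | [Ey Ex]]; last by congr pair; apply/val_inj.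
by split; [move/(congr1 (val \o fst)): E | move/(congr1 (val \o snd)): E].
Qed.

Lemma pt_val (p : 'I_t * 'I_v) : p = pt p.1 p.2.
Proof. by case: p => y x; rewrite /pt !valZpK. Qed.

Lemma mula_pt y x : mula (pt y x) = pt y (x + 1).
Proof. by apply/pt_eq; rewrite /= !modn_mod modnDml. Qed.

Lemma iter_mula m y x : iter m mula (pt y x) = pt y (x + m).
Proof. by elim: m => [|m IH] /=; rewrite ?addn0 // IH mula_pt addn1 addnS. Qed.

Lemma mulb_pt y x : y < t ->
  mulb (pt y x) = pt y.+1 (r * x + (y.+1 == t) * k).
Proof.
move=> lt_yt; rewrite /mulb /= (modn_small lt_yt); apply/pt_eq; split=> //.
by rewrite -modnDml modnMmr modnDml.
Qed.

Lemma iter_mulb c y x : y < t -> y + c <= t ->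
  iter c mulb (pt y x) = pt (y + c) (r ^ c * x + (y + c == t) * k).
Proof.
move=> lt_yt; elim: c => [|c IH] le_yct /=.
  by rewrite addn0 mul1n (ltn_eqF lt_yt) addn0.
rewrite -addSnnS in le_yct; rewrite IH ?(ltnW le_yct) // (ltn_eqF le_yct) addn0.
by rewrite mulb_pt // addnS expnS mulnA.
Qed.

Hypothesis r_t : r ^ t = 1 %[mod v].
Hypothesis k_r : k * r = k %[mod v].

Lemma mula_inj : injective mula.
Proof.
move=> p q; rewrite [p]pt_val [q]pt_val !mula_pt => /pt_eq [Ey Ex].
by apply/pt_eq; split=> //; apply/eqP; rewrite -(eqn_modDr 1) Ex.
Qed.

Lemma mulb_inj : injective mulb.
Proof.
move=> p q; rewrite [p]pt_val [q]pt_val !mulb_pt ?ltn_ord // => /pt_eq [Ey Ex].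
have {}Ey : (p.1 : nat) = q.1.
  move/eqP: Ey; rewrite -[(p.1 : nat).+1]addn1 -[(q.1 : nat).+1]addn1.
  by rewrite eqn_modDr !modn_small // => /eqP.
rewrite Ey in Ex *; apply/pt_eq; split=> //.
move/eqP: Ex; rewrite eqn_modDr => /eqP Ex.
rewrite -(modn_mulX1 r_t p.2) -[RHS](modn_mulX1 r_t q.2) expnSr -!mulnA.
by rewrite -modnMmr Ex modnMmr.
Qed.

Definition permA : {perm 'I_t * 'I_v} := perm mula_inj.
Definition permB : {perm 'I_t * 'I_v} := perm mulb_inj.

Lemma permAX m p : (permA ^+ m)%g p = iter m mula p.
Proof. by rewrite permX; apply: eq_iter => q; rewrite permE. Qed.

Lemma permBX c p : (permB ^+ c)%g p = iter c mulb p.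
Proof. by rewrite permX; apply: eq_iter => q; rewrite permE. Qed.

Lemma permA_order n : v %| n -> (permA ^+ n = 1)%g.
Proof.
move=> dvd_vn; apply/permP => p; rewrite permAX perm1 [p]pt_val iter_mula.
by apply/pt_eq; split=> //; rewrite -modnDmr (eqP dvd_vn) addn0.
Qed.

Lemma permB_order : (permB ^+ t = permA ^+ k)%g.
Proof.
apply/permP => p; rewrite permBX permAX [p]pt_val iter_mula.
have lt_yt := ltn_ord p.1; set y : nat := p.1; set x : nat := p.2.
have -> : iter t mulb (pt y x) = iter y mulb (iter (t - y) mulb (pt y x)).
  by rewrite -iterD subnKC // ltnW.
have le_yt := ltnW lt_yt.
rewrite iter_mulb ?subnKC // eqxx mul1n.
have -> : pt t (r ^ (t - y) * x + k) = pt 0 (r ^ (t - y) * x + k).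
  by apply/pt_eq; rewrite modnn mod0n.
rewrite iter_mulb ?add0n // (ltn_eqF lt_yt) addn0; apply/pt_eq; split=> //.
rewrite mulnDr mulnA -expnD subnKC // -modnDm modn_mulX1 // mulnC.
by rewrite modn_mulX_fixed // modnDm.
Qed.

Lemma permA_conj : (permA ^ permB = permA ^+ r)%g.
Proof.
suff commAB : (permA * permB = permB * permA ^+ r)%g.
  by rewrite conjgE commAB mulKg.
apply/permP => p; rewrite !permM permAX !permE [p]pt_val mula_pt.
rewrite !mulb_pt ?ltn_ord // iter_mula; apply/pt_eq; split=> //.
by rewrite mulnDr muln1 addnAC.
Qed.

Definition permAB m c := (permA ^+ m * permB ^+ c)%g.

Lemma permAB_apply m c p : permAB m c p = iter c mulb (iter m mula p).
Proof. by rewrite permM permAX permBX. Qed.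

Lemma permAB_origin m c : 0 < c -> c <= t -> r ^ c = 1 %[mod v] ->
  permAB m c (pt 0 0) = pt c (m + (c == t) * k).
Proof.
move=> c_gt0 le_ct r_c; rewrite permAB_apply iter_mula iter_mulb //.
by apply/pt_eq; split=> //; rewrite -modnDml modn_mulX1 // modnDml.
Qed.

(* The index i runs over 1..t/c rather than 0..t/c-1: i = t/c stands for the
   origin, which is how the condition k + m (t/c) = 0 mod v enters. *)
Lemma permAB_orbit m c : in_Bn t k r v m c -> forall j, exists2 i, 0 < i <= t %/ c &
  (permAB m c ^+ j)%g (pt 0 0) = pt (i * c) (i * m + (i * c == t) * k).
Proof.
case=> c_gt0 dvd_ct r_c hk; have tc_c : t %/ c * c = t by rewrite divnK.
elim=> [|j [i /andP [i_gt0 le_i] IH]].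
  exists (t %/ c); first by rewrite leqnn andbT divn_gt0 // dvdn_leq.
  rewrite expg0 perm1 tc_c eqxx mul1n; apply/pt_eq.
  by rewrite modnn mod0n (mulnC _ m) addnC hk mod0n.
rewrite expgSr permM IH.
have le_ict : i * c <= t by rewrite -tc_c leq_mul2r le_i orbT.
case: (ltnP i (t %/ c)) => [lt_i | ge_i].
  have lt_ict : i * c < t by rewrite -tc_c ltn_mul2r c_gt0.
  exists i.+1; first by rewrite lt_i.
  rewrite (ltn_eqF lt_ict) addn0 permAB_apply iter_mula iter_mulb //; last first.
    by rewrite addnC -mulSn -tc_c leq_mul2r lt_i orbT.
  apply/pt_eq; split; first by rewrite mulSnr.
  by rewrite -modnDml (modn_mulX1 r_c) modnDml !mulSnr.
have ei : i = t %/ c by apply/eqP; rewrite eqn_leq le_i ge_i.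
exists 1; first by rewrite leqnn divn_gt0 // dvdn_leq.
have -> : pt (i * c) (i * m + (i * c == t) * k) = pt 0 0.
  by apply/pt_eq; rewrite ei tc_c eqxx mul1n modnn mod0n (mulnC _ m) addnC hk mod0n.
by rewrite permAB_origin ?mul1n // dvdn_leq.
Qed.

Lemma permAB_mem_cycle m1 c1 m2 c2 :
  in_Bn t k r v m1 c1 -> in_Bn t k r v m2 c2 ->
  permAB m1 c1 \in <[permAB m2 c2]>%g ->
  exists i, c1 = i * c2 /\ m1 + (c1 == t) * k = i * m2 + (c1 == t) * k %[mod v].
Proof.
move=> [c1_gt0 dvd_c1t r_c1 _] B2 /cycleP [j /(congr1 (fun g : {perm _} => g (pt 0 0)))].
rewrite permAB_origin ?(dvdn_leq _ dvd_c1t) //.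
have [i /andP [i_gt0 le_i] ->] := permAB_orbit B2 j.
case: B2 => c2_gt0 dvd_c2t _ _.
have le_ict : i * c2 <= t by rewrite -(divnK dvd_c2t) leq_mul2r le_i orbT.
move/pt_eq=> [/eq_modn_pos e_c1 e_m]; exists i.
have {}e_c1 : c1 = i * c2.
  by apply: e_c1; rewrite ?muln_gt0 ?c1_gt0 ?i_gt0 ?c2_gt0 ?(dvdn_leq _ dvd_c1t).
by rewrite -e_c1 in e_m.
Qed.

Lemma permAB_cycle_eq m1 c1 m2 c2 :
  in_Bn t k r v m1 c1 -> in_Bn t k r v m2 c2 ->
  permAB m1 c1 \in <[permAB m2 c2]>%g -> permAB m2 c2 \in <[permAB m1 c1]>%g ->
  c1 = c2 /\ m1 = m2 %[mod v].
Proof.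
move=> B1 B2 /(permAB_mem_cycle B1 B2) [i [e_c1 e_m]].
move=> /(permAB_mem_cycle B2 B1) [i' [e_c2 _]].
have [c1_gt0 _ _ _] := B1.
have i1 : i = 1.
  have /eqP : i * i' * c1 = 1 * c1 by rewrite -mulnA -e_c2 -e_c1 mul1n.
  by rewrite eqn_pmul2r // muln_eq1 => /andP [/eqP].
move: e_c1 e_m; rewrite i1 !mul1n => -> /eqP e_m; split=> //.
by apply/eqP; rewrite -(eqn_modDr ((c2 == t) * k)).
Qed.

End CayleyModel.

Local Open Scope group_scope.

Lemma gen2_mulXl (gT : finGroupType) (u w : gT) q :
  <<[set u; w]>> = <<[set u; u ^+ q * w]>>.
Proof.
apply/eqP; rewrite eqEsubset !gen_subG; apply/andP; split;
  apply/subsetP => x /set2P [->|->].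
- by rewrite mem_gen ?set21.
- have uq : u ^+ q \in <<[set u; u ^+ q * w]>> by rewrite groupX // mem_gen ?set21.
  by rewrite -(groupMl w uq) mem_gen ?set22.
- by rewrite mem_gen ?set21.
- by rewrite groupM ?groupX // mem_gen ?set21 ?set22.
Qed.

Lemma gen2_cycle (gT : finGroupType) (u u' w : gT) :
  u' \in <[u]> -> u \in <[u']> -> <<[set u; w]>> = <<[set u'; w]>>.
Proof.
move=> u'_u u_u'; apply/eqP; rewrite eqEsubset !gen_subG; apply/andP; split;
  apply/subsetP => x /set2P [->|->]; try by rewrite mem_gen ?set22.
- by apply: (subsetP _ _ u_u'); rewrite cycle_subG mem_gen ?set21.
- by apply: (subsetP _ _ u'_u); rewrite cycle_subG mem_gen ?set21.
Qed.

Lemma conjXself (gT : finGroupType) (x : gT) m : (x ^+ m) ^ x = x ^+ m.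
Proof. by rewrite conjXg conjgE mulKg. Qed.

Lemma conj_set2 (gT : finGroupType) (x y g : gT) :
  [set x; y] :^ g = [set x ^ g; y ^ g].
Proof. by rewrite conjUg !conjg_set1. Qed.

Lemma expg_eqmod (gT : finGroupType) (x : gT) n v e f :
  0 < n -> x ^+ n = 1 -> v %| n -> e = f %[mod v] ->
  exists q, x ^+ e = x ^+ f * (x ^+ v) ^+ q.
Proof.
move=> n_gt0 xn dvd_vn e_f; set e' := e + n * f.
have le_fe' : f <= e' by rewrite (leq_trans (leq_pmull f n_gt0)) ?leq_addl.
have dvd_v : v %| e' - f.
  rewrite -eqn_mod_dvd // -modnDmr -modnMml (eqP dvd_vn) mul0n mod0n addn0.
  exact/eqP.
have -> : x ^+ e = x ^+ e' by rewrite expgD expgM xn expg1n mulg1.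
by exists ((e' - f) %/ v); rewrite -expgM mulnC divnK // -expgD subnKC.
Qed.

Lemma zexpg_modz (gT : finGroupType) (x : gT) (n : nat) (z : int) :
  0 < n -> x ^+ n = 1 -> zexpg x z = x ^+ `|(z %% n)%Z|.
Proof.
move=> n_gt0 x_n; case: z => m /=; first by rewrite modz_nat absz_nat expg_mod.
set p := `|(Negz m %% n)%Z|%N.
have p_def : (p%:Z = Negz m %% n)%Z by rewrite /p gez0_abs // modz_ge0 // eqz_nat -lt0n.
have dvd_n : n %| p + m.+1.
  suff : (n%:Z %| (p + m.+1)%N%:Z)%Z by rewrite dvdzE !absz_nat.
  by apply/dvdz_mod0P; rewrite PoszD p_def modzDml NegzE addNr mod0z.
apply/eqP; rewrite eq_invg_mul -expgD addnC -(divnK dvd_n) mulnC expgM x_n.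
by rewrite expg1n.
Qed.

Section HsubConjugation.

Variables (gT : finGroupType) (a b : gT) (n r : nat).
Hypothesis n_gt0 : 0 < n.
Hypothesis a_n : a ^+ n = 1.
Hypothesis conj_ab : a ^ b = a ^+ r.

Lemma HsubE (v m c : nat) : Hsub a b v m c = <<[set a ^+ v; a ^+ m * b ^+ c]>>.
Proof. by []. Qed.

Lemma Hsub_modz (v : nat) (z c : int) :
  Hsub a b v z c = Hsub a b v `|(z %% n)%Z|%N c.
Proof. by rewrite /Hsub (zexpg_modz _ n_gt0 a_n). Qed.

Lemma Hsub_eqmod (v m1 m2 c : nat) :
  m1 = m2 %[mod v] -> Hsub a b v m1 c = Hsub a b v m2 c.
Proof.
suff Hsub_modv (m : nat) : Hsub a b v m c = Hsub a b v (m %% v)%N c.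
  by move=> e_m; rewrite Hsub_modv e_m -Hsub_modv.
by rewrite !HsubE {1}(divn_eq m v) expgD mulnC expgM -mulgA -gen2_mulXl.
Qed.

Lemma conjg_bX c : a ^ (b ^+ c) = a ^+ (r ^ c).
Proof.
elim: c => [|c IH]; first by rewrite conjg1 expg1.
by rewrite expgSr conjgM IH conjXg conj_ab -expgM expnS.
Qed.

Lemma Hsub_conjb (t v m c : nat) : 0 < t -> r ^ t = 1 %[mod n] ->
  Hsub a b v m c :^ b = Hsub a b v (m * r)%N c.
Proof.
move=> t_gt0 r_t; rewrite !HsubE -genJ conj_set2 conjMg conjXself !conjXg conj_ab.
rewrite -!expgM [(m * r)%N]mulnC; apply: esym; apply: gen2_cycle.
  by apply/cycleP; exists r; rewrite -expgM mulnC.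
have a_rt : a ^+ (r ^ t) = a by rewrite -(expg_mod _ a_n) r_t (expg_mod _ a_n) expg1.
apply/cycleP; exists (r ^ t.-1)%N; rewrite -expgM (mulnC r) -mulnA -expnS prednK //.
by rewrite mulnC expgM a_rt.
Qed.

Lemma Hsub_conja (v m c : nat) : v %| n -> r ^ c = 1 %[mod v] ->
  Hsub a b v m c :^ a = Hsub a b v m c.
Proof.
move=> dvd_vn r_c; apply/eqP; rewrite eqEcard cardJg leqnn andbT.
rewrite HsubE -genJ gen_subG conj_set2 conjXself; apply/subsetP=> x /set2P [] ->.
  by rewrite mem_gen ?set21.
have [q a_rc] := expg_eqmod n_gt0 a_n dvd_vn r_c; rewrite expg1 in a_rc.
have comm_bc : b ^+ c * a = a * b ^+ c * ((a ^+ v) ^+ q)^-1.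
  by rewrite (conjgC a) conjg_bX a_rc mulgA mulgK.
rewrite conjMg conjXself conjgE comm_bc -!mulgA mulKg mulgA groupMl.
  by rewrite groupV groupX // mem_gen ?set21.
exact: mem_gen (set22 _ _).
Qed.

Lemma Hsub_conj_bX (t v m c j : nat) : 0 < t -> r ^ t = 1 %[mod n] ->
  Hsub a b v m c :^ (b ^+ j) = Hsub a b v (m * r ^ j)%N c.
Proof.
move=> t_gt0 r_t; elim: j => [|j IH]; first by rewrite conjsg1 muln1.
by rewrite expgSr conjsgM IH (Hsub_conjb _ _ _ t_gt0 r_t) expnSr mulnA.
Qed.

Lemma Hsub_conj_gen (t v m c : nat) g : 0 < t -> r ^ t = 1 %[mod n] ->
  v %| n -> r ^ c = 1 %[mod v] -> g \in <<[set a; b]>> ->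
  exists j, Hsub a b v m c :^ g = Hsub a b v (m * r ^ j)%N c.
Proof.
move=> t_gt0 r_t dvd_vn r_c /gen_prodgP [N [x x_ab ->]].
elim: N x x_ab => [|N IH] x x_ab; first by exists 0; rewrite big_ord0 conjsg1 muln1.
rewrite big_ord_recr /= conjsgM.
have [j ->] := IH (fun i => x (widen_ord (leqnSn N) i)) (fun i => x_ab _).
case/set2P: (x_ab ord_max) => ->; first by exists j; rewrite Hsub_conja.
by exists j.+1; rewrite (Hsub_conjb _ _ _ t_gt0 r_t) expnSr mulnA.
Qed.

End HsubConjugation.

Local Close Scope group_scope.

Lemma morph_Hsub (aT rT : finGroupType) (G : {group aT}) (f : {morphism G >-> rT})
    (a b : aT) (v m c : nat) x :
  a \in G -> b \in G -> (f a ^+ v = 1)%g -> x \in Hsub a b v m c ->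
  f x \in <[(f a ^+ m * f b ^+ c)%g]>%g.
Proof.
move=> aG bG fa_v x_H.
have sub_G : [set (a ^+ v)%g; (a ^+ m * b ^+ c)%g] \subset G.
  by apply/subsetP => z /set2P [] ->; rewrite ?groupM ?groupX.
have x_G : x \in G by apply: (subsetP _ _ x_H); rewrite gen_subG.
have := mem_morphim f x_G x_H; rewrite HsubE morphim_gen //.
apply: subsetP; rewrite gen_subG; apply/subsetP => _ /morphimP [z zG /set2P [] -> ->].
  by rewrite morphX // fa_v group1.
by rewrite morphM ?groupX // !morphX // cycle_id.
Qed.

Section Presentation.

Variables (gT : finGroupType) (G : {group gT}) (a b : gT) (n t k r : nat).
Hypothesis n_gt0 : 0 < n.
Hypothesis t_gt0 : 0 < t.
Hypothesis r_t : r ^ t = 1 %[mod n].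
Hypothesis k_r : k * r = k %[mod n].
Hypothesis presG : is_metacyclic_presentation G a b n t k r.

Lemma eq_Hsub_in_Bn (v m1 c1 m2 c2 : nat) : 0 < v -> v %| n ->
  in_Bn t k r v m1 c1 -> in_Bn t k r v m2 c2 ->
  Hsub a b v m1 c1 = Hsub a b v m2 c2 -> c1 = c2 /\ m1 = m2 %[mod v].
Proof.
case: presG => G_ab _ _ _ univ; case: v => [//|v'] _ dvd_vn.
have [t' def_t] : exists t', t = t'.+1 by exists t.-1; rewrite prednK.
rewrite def_t in univ * => B1 B2 eqH.
have r_tv : r ^ t'.+1 = 1 %[mod v'.+1] by rewrite -def_t (eqmod_dvd dvd_vn r_t).
have k_rv := eqmod_dvd dvd_vn k_r.
have [f [fa fb]] := univ _ _ _ (permA_order t' dvd_vn) (permB_order r_tv k_rv)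
  (permA_conj k r_tv).
have aG : a \in G by rewrite G_ab mem_gen ?set21.
have bG : b \in G by rewrite G_ab mem_gen ?set22.
have fa_v : (f a ^+ v'.+1 = 1)%g by rewrite fa permA_order.
have image_in_cycle (m c m' c' : nat) : Hsub a b v'.+1 m c = Hsub a b v'.+1 m' c' ->
    permAB k r_tv m c \in <[permAB k r_tv m' c']>%g.
  move=> eqH'; have : (a ^+ m * b ^+ c)%g \in Hsub a b v'.+1 m' c'.
    by rewrite -eqH' mem_gen ?set22.
  by move/(morph_Hsub aG bG fa_v); rewrite morphM ?groupX // !morphX // fa fb.
exact: permAB_cycle_eq B1 B2 (image_in_cycle _ _ _ _ eqH)
  (image_in_cycle _ _ _ _ (esym eqH)).
Qed.

Lemma conj_Hsub_iff (v m1 c1 m2 c2 : nat) : 0 < v -> v %| n ->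
  in_Bn t k r v m1 c1 -> in_Bn t k r v m2 c2 ->
  (exists2 g, g \in G & (Hsub a b v m1 c1 :^ g)%g = Hsub a b v m2 c2)
  <-> c1 = c2 /\ exists j : int, congr_rpow v r m1 m2 j.
Proof.
move=> v_gt0 dvd_vn B1 B2; have [G_ab a_n _ conj_ab _] := presG.
have k_rv := eqmod_dvd dvd_vn k_r.
split.
  move=> [g gG]; have r_c1 : r ^ c1 = 1 %[mod v] by case: B1.
  have g_ab : g \in <<[set a; b]>>%g by rewrite -G_ab.
  have [j ->] := Hsub_conj_gen n_gt0 a_n conj_ab m1 t_gt0 r_t dvd_vn r_c1 g_ab.
  move/(eq_Hsub_in_Bn v_gt0 dvd_vn (in_Bn_mulX j k_rv B1) B2) => [<- e_m]; split=> //.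
  case: j e_m => [|j] e_m.
    by exists 0; apply/congr_rpow_Posz; move: e_m; rewrite !muln1.
  by exists (Negz j); apply/congr_rpow_Negz.
move=> [<- [[j|j] e_m]].
  move/congr_rpow_Posz: e_m => e_m.
  exists (b ^+ j)^-1%g; first by rewrite groupV groupX // G_ab mem_gen ?set22.
  by rewrite (Hsub_eqmod _ _ _ e_m) -(Hsub_conj_bX a_n conj_ab _ _ _ _ t_gt0 r_t) conjsgK.
move/congr_rpow_Negz: e_m => e_m.
exists (b ^+ j.+1)%g; first by rewrite groupX // G_ab mem_gen ?set22.
by rewrite (Hsub_conj_bX a_n conj_ab _ _ _ _ t_gt0 r_t) (Hsub_eqmod _ _ _ e_m).
Qed.

End Presentation.

Theorem lemma3 (gT : finGroupType) (G : {group gT}) (a b : gT)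
    (n t k r : nat) (v i c : nat) (alpha1 beta1 alpha2 beta2 : int) :
  0 < n -> 0 < t ->
  r ^ t = 1 %[mod n] ->
  (k%:Z * (r%:Z - 1) = 0 %[mod n%:Z])%Z ->
  is_metacyclic_presentation G a b n t k r ->
  in_frakN n t k r v i c ->
  in_X n t k r v i c alpha1 beta1 ->
  in_X n t k r v i c alpha2 beta2 ->
  (exists2 g, g \in G &
     (Hsub a b v alpha1 (beta1 * (ordv v r)%:Z) :^ g)%g
       = Hsub a b v alpha2 (beta2 * (ordv v r)%:Z))
  <-> (beta1 = beta2 /\ exists j : int, congr_rpow v r alpha1 alpha2 j).
Proof.
move=> n_gt0 t_gt0 r_t /eqmod_mul_subr1 k_r presG _ [X1 _ _ _ _] [X2 _ _ _ _].
have [_ a_n _ _ _] := presG.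
have [b1 -> [v_gt0 dvd_vn B1]] := in_B_in_Bn n_gt0 X1.
have [b2 -> [_ _ B2]] := in_B_in_Bn n_gt0 X2.
have o_gt0 : 0 < ordv v r by case: B1; rewrite muln_gt0 => /andP [].
have e_mod z := modz_absz_eqmod z n_gt0 dvd_vn.
rewrite -!PoszM (Hsub_modz b n_gt0 a_n v alpha1) (Hsub_modz b n_gt0 a_n v alpha2).
rewrite (conj_Hsub_iff n_gt0 t_gt0 r_t k_r presG) //.
have e_congr j := congr_rpow_modz r j (e_mod alpha1) (e_mod alpha2).
split=> [[/eqP e_b [j /e_congr e_j]] | [[->] [j /e_congr e_j]]].
  by rewrite eqn_pmul2r // in e_b; rewrite (eqP e_b); split; last exists j.
by split; last exists j.
Qed.
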